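(* For every positive integer $n$, there exists a finite semigroup $S$ with a principal right ideal $A$ such that $\mathrm{H}_{\mathcal{R}}(S)=n$ and $\mathrm{H}_{\mathcal{R}}(A)=2n-1$.
   Context: For a semigroup $S$, $S^1$ denotes $S$ with an identity adjoined if necessary; a principal right ideal is a set of the form $aS^1$ with $a\in S$. Green's preorder on a semigroup $M$: $u\leq_{\mathcal{R}} v$ iff $uM^1\subseteq vM^1$; $\mathcal{R}$ is the associated equivalence; the $\mathcal{R}$-height $\mathrm{H}_{\mathcal{R}}(M)$ is the supremum of the cardinalities of chains in the poset of $\mathcal{R}$-classes. $\mathrm{H}_{\mathcal{R}}(A)$ is computed in $A$ as a semigroup. *)

From mathcomp Require Import all_boot.
Set Implicit Arguments. Unset Strict Implicit. Unset Printing Implicit Defensive.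

(* A finite semigroup is a finite type T with an associative operation op.
   A subsemigroup M of it is a subset closed under op; computations "in M"
   use M with the restricted operation. *)

Section Green.
Variables (T : finType) (op : T -> T -> T).

(* Green's R-preorder computed in the semigroup M (as a semigroup):
   u <=_R v  iff  u M^1 \subseteq v M^1  iff  u = v or u = v w for some w in M. *)
Definition Rle (M : {set T}) (u v : T) : bool :=
  (u == v) || [exists w in M, u == op v w].

Definition Rlt (M : {set T}) (u v : T) : bool := Rle M u v && ~~ Rle M v u.

(* a chain of R-classes of M of cardinality size s, given by representatives
   listed in strictly increasing order *)
Definition Rchain (M : {set T}) (s : seq T) : bool :=
  all (fun x => x \in M) s && sorted (Rlt M) s.

(* the R-height of M equals h (M finite, so the supremum is a maximum) *)
Definition R_height_eq (M : {set T}) (h : nat) : Prop :=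
  (exists s, Rchain M s /\ size s = h) /\
  (forall s, Rchain M s -> size s <= h).

Definition princ_right_ideal (a : T) : {set T} :=
  a |: [set op a s | s : T].
End Green.

From mathcomp Require Import all_boot zify.
Set Implicit Arguments. Unset Strict Implicit. Unset Printing Implicit Defensive.

(* Take binary words modulo the data (first letter, number of descents 10
   capped at m, last letter).  In the whole semigroup a right factor starting
   with 1 creates no descent, so the R-class of a word is its first letter and
   descent count: m.+1 levels.  In the ideal of words starting with 0, right
   factors also start with 0, so a descent appears only at a junction after a
   final 1; the R-class now also remembers the last letter, and the rank
   2 * descents + last letter climbs through 2 * m + 1 levels.  Both heights
   follow from an explicit chain together with a rank that strictly decreases
   along <_R. *)

Section RankedChains.
Variables (T : Type) (r : rel T) (rk : T -> nat).
Hypothesis rk_decr : forall x y, r x y -> rk y < rk x.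

Lemma path_size_le_rank x s : path r x s -> size s <= rk x.
Proof. by elim: s x => //= y s IH x /andP[/rk_decr lt_xy /IH]; lia. Qed.

Lemma sorted_size_le_rank h s :
  all (fun x => rk x < h) s -> sorted r s -> size s <= h.
Proof. by case: s => //= x s /andP[rk_x _] /path_size_le_rank; lia. Qed.

End RankedChains.

Section GreenRank.
Variables (T : finType) (op : T -> T -> T) (M : {set T}).

Lemma RleP u v :
  reflect (u = v \/ exists2 w, w \in M & u = op v w) (Rle op M u v).
Proof.
apply: (iffP orP) => [[/eqP | /exists_inP[w wM /eqP]] | [-> | [w wM ->]]].
- by left.
- by right; exists w.
- by left.
- by right; apply/exists_inP; exists w.
Qed.

Variable rk : T -> nat.
Hypothesis rk_Rle : forall u v, Rle op M u v -> rk v <= rk u.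
Hypothesis Rle_rk_eq : forall u v, Rle op M u v -> rk u = rk v -> Rle op M v u.

Lemma RltE_rank u v : Rlt op M u v = Rle op M u v && (rk v < rk u).
Proof.
rewrite /Rlt; case uv: (Rle op M u v) => //=.
apply/idP/idP => [nvu | lt_vu]; last by apply/negP => /rk_Rle; lia.
rewrite ltn_neqAle rk_Rle // andbT; apply: contra nvu => /eqP eq_vu.
exact: Rle_rk_eq uv (esym eq_vu).
Qed.

Lemma R_height_eq_rank h (c : nat -> T) :
  (forall u, u \in M -> rk u < h) ->
  (forall k, k < h -> c k \in M) ->
  (forall k, k.+1 < h -> Rle op M (c k) (c k.+1) /\ rk (c k.+1) < rk (c k)) ->
  R_height_eq op M h.
Proof.
move=> rk_lt c_in c_step; split.
  exists (mkseq c h); rewrite size_mkseq; split=> //; apply/andP; split.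
    apply/allP => x /mapP[k]; rewrite mem_iota => /andP[_ lt_kh] ->.
    exact: c_in.
  apply/(sortedP (c 0)) => k; rewrite size_mkseq => lt_kh.
  have [c_Rle c_rk] := c_step k lt_kh.
  by rewrite !nth_mkseq ?RltE_rank ?c_Rle //; apply: ltnW.
move=> s /andP[s_in sorted_s].
apply: (sorted_size_le_rank (rk := rk)) sorted_s.
  by move=> u v; rewrite RltE_rank => /andP[].
by apply/allP => u /(allP s_in) /rk_lt.
Qed.

End GreenRank.

Section DescentSemigroup.
Variable m : nat.

(* (first letter, descents, last letter) with letters read as [0 = false];
   every triple is allowed, including ones such as (true, 0, false) that no
   word realises, and the product stays associative. *)
Definition dword := (bool * 'I_m.+1 * bool)%type.

Definition dw_mul (x y : dword) : dword :=
  (x.1.1, inord (minn (x.1.2 + (x.2 && ~~ y.1.1) + y.1.2) m), y.2).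

Lemma dw_mul_desc (x y : dword) :
  (dw_mul x y).1.2 = minn (x.1.2 + (x.2 && ~~ y.1.1) + y.1.2) m :> nat.
Proof. by rewrite inordK // ltnS geq_minr. Qed.

Lemma dw_mul_eq (x y z : dword) :
  x.1.1 = z.1.1 -> y.2 = z.2 ->
  minn (x.1.2 + (x.2 && ~~ y.1.1) + y.1.2) m = z.1.2 -> dw_mul x y = z.
Proof.
move: z => [[zf zd] zl] /= <- <- desc_xy.
by congr (_, _, _); apply: val_inj; rewrite /= desc_xy inordK.
Qed.

Lemma dw_mulA : associative dw_mul.
Proof.
move=> [[xf xd] xl] [[yf yd] yl] [[zf zd] zl].
apply: dw_mul_eq => //=.
rewrite !inordK ?ltnS ?geq_minr //.
by case: xl yf yl zf => [] [] [] [] /=; lia.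
Qed.

Lemma dw_Rle_first (M : {set dword}) (u v : dword) :
  Rle dw_mul M u v -> u.1.1 = v.1.1.
Proof. by case/RleP => [-> | [w _ ->]]. Qed.

Lemma dw_Rle_desc (M : {set dword}) (u v : dword) :
  Rle dw_mul M u v -> v.1.2 <= u.1.2.
Proof.
case/RleP => [-> // | [w _ ->]].
by rewrite dw_mul_desc; have := ltn_ord v.1.2; case: (_ && _) => /=; lia.
Qed.

Lemma Rle_desc_eq (M : {set dword}) (u v : dword) :
  Rle dw_mul M u v -> u.1.2 = v.1.2 :> nat -> Rle dw_mul [set: dword] v u.
Proof.
move=> /dw_Rle_first eq_first eq_desc.
apply/RleP; right; exists (true, ord0, v.2); first by rewrite in_setT.
apply/esym/dw_mul_eq; rewrite //= andbF eq_desc.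
by have := ltn_ord v.1.2; lia.
Qed.

Lemma R_height_dword : R_height_eq dw_mul [set: dword] m.+1.
Proof.
apply: (R_height_eq_rank (rk := fun x : dword => nat_of_ord x.1.2)
  (c := fun k => (false, inord (m - k), false))
  (@dw_Rle_desc _) (@Rle_desc_eq _)).
- by move=> u _; apply: ltn_ord.
- by move=> k _; rewrite in_setT.
move=> k lt_km; rewrite /= !inordK; try lia; split=> //; last lia.
apply/RleP; right; exists (false, inord 1, false); first by rewrite in_setT.
by apply/esym/dw_mul_eq => //=; rewrite !inordK; lia.
Qed.

(* the class of the alternating word 0101... of length k.+1 *)
Definition alt_word k : dword := (false, inord k./2, odd k).

Lemma alt_word_desc k : k <= 2 * m -> (alt_word k).1.2 = k./2 :> nat.
Proof. by move=> le_k; rewrite inordK //; have := leq_half_double k m; lia. Qed.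

Local Notation A := (princ_right_ideal dw_mul (alt_word 0)).

Lemma mem_dw_ideal (w : dword) : (w \in A) = ~~ w.1.1.
Proof.
apply/idP/idP => [/setU1P[-> // | /imsetP[s _ ->] //] | w_A].
apply/setU1P; right; apply/imsetP; exists (false, w.1.2, w.2) => //.
apply/esym/dw_mul_eq; rewrite /= ?inordK //; first by case: (w.1.1) w_A.
by rewrite !add0n; apply/minn_idPl; rewrite -ltnS.
Qed.

Definition ideal_rank (x : dword) := minn (2 * x.1.2 + x.2) (2 * m).

Lemma ideal_rank_alt_word k : k <= 2 * m -> ideal_rank (alt_word k) = k.
Proof.
move=> le_k; rewrite /ideal_rank alt_word_desc //=.
by have := odd_double_half k; lia.
Qed.

Lemma ideal_rank_Rle (u v : dword) :
  Rle dw_mul A u v -> ideal_rank v <= ideal_rank u.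
Proof.
case/RleP => [-> // | [w w_A ->]]; rewrite mem_dw_ideal in w_A.
rewrite /ideal_rank dw_mul_desc (negbTE w_A) andbT /=.
by have := ltn_ord v.1.2; case: (v.2) => /=; lia.
Qed.

Lemma Rle_ideal_rank_eq (u v : dword) :
  Rle dw_mul A u v -> ideal_rank u = ideal_rank v -> Rle dw_mul A v u.
Proof.
case/RleP => [-> _ | [w w_A ->] eq_rank]; first by apply/RleP; left.
apply/RleP; right; exists (false, ord0, v.2); first by rewrite mem_dw_ideal.
rewrite mem_dw_ideal in w_A.
apply/esym/dw_mul_eq => //=; move: eq_rank.
rewrite /ideal_rank !dw_mul_desc (negbTE w_A) /= !andbT addn0.
by have := ltn_ord v.1.2; case: (v.2) (w.2) => [] [] /=; lia.
Qed.

Lemma alt_word_Rle_succ j :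
  j < 2 * m -> Rle dw_mul A (alt_word j.+1) (alt_word j).
Proof.
move=> lt_j; apply/RleP; right; exists (false, ord0, odd j.+1).
  by rewrite mem_dw_ideal.
apply/esym/dw_mul_eq; rewrite ?alt_word_desc ?(ltnW lt_j) //=.
rewrite andbT addn0 uphalf_half; have := leq_half_double j m; lia.
Qed.

Lemma R_height_dw_ideal : R_height_eq dw_mul A (2 * m).+1.
Proof.
apply: (R_height_eq_rank (c := fun k => alt_word (2 * m - k))
  ideal_rank_Rle Rle_ideal_rank_eq).
- by move=> u _; rewrite ltnS geq_minr.
- by move=> k _; rewrite mem_dw_ideal.
move=> k lt_k; rewrite !ideal_rank_alt_word; try lia; split; last lia.
have -> : 2 * m - k = (2 * m - k.+1).+1 by lia.
apply: alt_word_Rle_succ; lia.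
Qed.

End DescentSemigroup.

Theorem corollary4p6 :
  forall n : nat, 0 < n ->
  exists (T : finType) (op : T -> T -> T),
    associative op /\
    exists a : T,
      R_height_eq op [set: T] n /\
      R_height_eq op (princ_right_ideal op a) (2 * n - 1).
Proof.
move=> [|m] // _; exists (dword m), (@dw_mul m); split; first exact: dw_mulA.
exists (alt_word m 0); split; first exact: R_height_dword.
by rewrite mulnS add2n subn1; apply: R_height_dw_ideal.
Qed.
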